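(* Let $1\le r\le s\le t$ and let $u=ABCd$, $v=A'B'C'd'$ be vertices of $E3C(r,s,t)$ with $A=A'$, $B\ne B'$, $C\ne C'$ and $d=d'$. Then there exist $2r+2$ pairwise internally disjoint $u$–$v$ paths in $E3C(r,s,t)$, each of length at most $s+t+7$ if $d\in\{0,1\}$, and each of length at most $s+t+5$ if $d=2$.
   Context: The exchanged 3-ary $n$-cube $E3C(r,s,t)$ ($r,s,t\ge1$, $n=r+s+t+1$): vertices are strings written $x=ABCd$ with $A\in\{0,1,2\}^r$, $B\in\{0,1,2\}^s$, $C\in\{0,1,2\}^t$, $d\in\{0,1,2\}$. Two distinct vertices $x=ABCd$, $y=A'B'C'd'$ are adjacent iff one of: (E0) $A=A',B=B',C=C'$ and $d\ne d'$; (E1) $d=d'=0$, $A=A'$, $B=B'$ and $C,C'$ differ in exactly one position; (E2) $d=d'=1$, $A=A'$, $C=C'$ and $B,B'$ differ in exactly one position; (E3) $d=d'=2$, $B=B'$, $C=C'$ and $A,A'$ differ in exactly one position. Paths are internally disjoint if they share no vertices other than their endpoints; length = number of edges. *)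

From mathcomp Require Import all_boot.
Set Implicit Arguments. Unset Strict Implicit. Unset Printing Implicit Defensive.

Definition word (n : nat) := {ffun 'I_n -> 'I_3}.

Definition differ1 n (X Y : word n) : bool := #|[set i | X i != Y i]| == 1.

Definition vtx (r s t : nat) := (word r * word s * word t * 'I_3)%type.

Definition e3c_adj (r s t : nat) : rel (vtx r s t) := fun x y =>
  let '(A, B, C, d) := x in
  let '(A', B', C', d') := y in
  [|| [&& A == A', B == B', C == C' & d != d'],
      [&& val d == 0, val d' == 0, A == A', B == B' & differ1 C C'],
      [&& val d == 1, val d' == 1, A == A', C == C' & differ1 B B']
    | [&& val d == 2, val d' == 2, B == B', C == C' & differ1 A A'] ].

(* A u-v path is given by the list q of vertices after u (so the path is
   u :: q); it is simple, follows edges, and ends at v. Its length is size q. *)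
Definition e3c_path r s t (u v : vtx r s t) (q : seq (vtx r s t)) : bool :=
  [&& path (@e3c_adj r s t) u q, last u q == v & uniq (u :: q)].

Definition interior r s t (v : vtx r s t) (q : seq (vtx r s t)) :=
  [seq x <- q | x != v].

Definition int_disjoint r s t (v : vtx r s t) (q1 q2 : seq (vtx r s t)) : bool :=
  ~~ has (fun x => x \in interior v q2) (interior v q1).

From mathcomp Require Import all_boot zify.
Set Implicit Arguments. Unset Strict Implicit. Unset Printing Implicit Defensive.
Set Bullet Behavior "Strict Subproofs".

(* Every route leaves u through its own neighbour and enters v through its own
   neighbour.  For d = 2, each of the 2r neighbours A* of A (one letter
   changed) gives a route that steps to A*, fixes B, then C, and steps back to
   A; two more routes stay at A, one fixing B first, the other C first.
   For d = 0, u's B-neighbour starts the route fixing B then C, and u's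
   A-neighbour a detour of the same kind through a neighbour of A.  Changing
   letter j < r of C gives 2r more neighbours: a value outside {C_j, C'_j} is
   kept along a B-then-C route and dropped only at the last step into v; the
   value C'_j at the first difference of C and C' starts the route fixing C,
   then B; at a later difference it starts a detour through a neighbour of A
   that enters v by reverting the previous difference.  The case d = 1 is the
   case d = 0 with B and C exchanged.
   Each route stays inside its own zone of vertices; zones are separated by
   the A-word, the direction d, and the shape of the C-word (a prefix splice
   of C and C', a letterwise mixture of them, or neither).  Walks are finally
   shortened to simple paths. *)

Definition other3 (x : 'I_3) (b : bool) : 'I_3 := inord ((x + b.+1) %% 3).

Lemma other3_neq x b : other3 x b != x.
Proof. by case: x => [[|[|[|]]] ?] //; case: b; rewrite -val_eqE /= inordK. Qed.

Lemma other3_inj x : injective (other3 x).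
Proof.
move=> b b' /(congr1 val); rewrite /= !inordK ?ltn_pmod //.
by case: x => [[|[|[|]]] ?] //; case: b; case: b'.
Qed.

Section Words.
Variable n : nat.
Implicit Types (X Y M : word n) (i j p : 'I_n) (k : nat).

Definition upd X j (c : 'I_3) : word n := [ffun i => if i == j then c else X i].

Lemma upd_eq X j c : upd X j c j = c.
Proof. by rewrite ffunE eqxx. Qed.

Lemma upd_neq X j c i : i != j -> upd X j c i = X i.
Proof. by rewrite ffunE => /negbTE ->. Qed.

Lemma differ1C X Y : differ1 X Y = differ1 Y X.
Proof. by congr (_ == _); apply: eq_card => i; rewrite !inE eq_sym. Qed.

Lemma differ1_upd X j c : X j != c -> differ1 X (upd X j c).
Proof.
move=> Xj; rewrite /differ1 (_ : [set i | _] = [set j]) ?cards1 //; apply/setP => i.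
by rewrite !inE ffunE; case: (eqVneq i j) => [->|]; rewrite ?eqxx.
Qed.

Definition splice X Y (k : nat) : word n := [ffun i : 'I_n => if i < k then Y i else X i].

Lemma splice0 X Y : splice X Y 0 = X.
Proof. by apply/ffunP => i; rewrite ffunE. Qed.

Lemma splice_all X Y : splice X Y n = Y.
Proof. by apply/ffunP => i; rewrite ffunE ltn_ord. Qed.

Definition mixed X Y M := forall i, M i = X i \/ M i = Y i.

Lemma splice_mixed X Y k : mixed X Y (splice X Y k).
Proof. by move=> i; rewrite ffunE; case: ifP; [right | left]. Qed.

Lemma mixed_upd X Y M j c : mixed X Y M -> c = X j \/ c = Y j -> mixed X Y (upd M j c).
Proof. by move=> mM cj i; rewrite ffunE; case: (eqVneq i j) => [->|]. Qed.

Lemma upd_not_mixed X Y M j c : c != X j -> c != Y j -> ~ mixed X Y (upd M j c).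
Proof. by move=> cX cY /(_ j); rewrite upd_eq => -[] /eqP; apply/negP. Qed.

Lemma upd_mixed_inj X Y M M' j j' c c' : mixed X Y M' -> c != X j -> c != Y j ->
  upd M j c = upd M' j' c' -> j = j' /\ c = c'.
Proof.
move=> mM' cX cY E; have unfixC := congr1 (fun W : word n => W j) E; move: unfixC => /=.
rewrite upd_eq; case: (eqVneq j j') => [<-|jj']; first by rewrite upd_eq.
by rewrite upd_neq // => cM; case: (mM' j) => /eqP; rewrite -cM ?(negbTE cX) ?(negbTE cY).
Qed.

Lemma upd_inj X j j' c c' : c != X j -> upd X j c = upd X j' c' -> j = j'.
Proof.
move=> cX /ffunP /(_ j); rewrite upd_eq; case: (eqVneq j j') => // jj'.
by rewrite upd_neq // => E; rewrite E eqxx in cX.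
Qed.

Lemma splice_upd X Y j c k : splice (upd X j c) (upd Y j c) k = upd (splice X Y k) j c.
Proof. by apply/ffunP => i; rewrite !ffunE; case: ifP; case: eqP. Qed.

(* A splice of [X] and [Y] agrees with [Y] on a prefix and with [X] on the
   rest, so it cannot fix a difference of [X] and [Y] while keeping an earlier
   one. *)
Lemma upd_neq_splice X Y j p k : p < j -> X p != Y p -> X j != Y j ->
  upd X j (Y j) != splice X Y k.
Proof.
move=> prevC Xp Xj; apply/eqP => /ffunP E.
have jk : j < k.
  by move: (E j); rewrite !ffunE eqxx; case: ltnP => // _ /eqP; rewrite eq_sym (negbTE Xj).
have /negbTE pj' : p != j by rewrite neq_ltn prevC.
by move: (E p); rewrite !ffunE pj' (ltn_trans prevC jk) => /eqP; rewrite (negbTE Xp).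
Qed.

Lemma updr_neq_splice X Y j p k : p < j -> X p != Y p -> X j != Y j ->
  upd Y p (X p) != splice X Y k.
Proof.
move=> prevC Xp Xj; apply/eqP => /ffunP E.
have kp : k <= p.
  by move: (E p); rewrite !ffunE eqxx; case: ltnP => // _ /eqP; rewrite (negbTE Xp).
have /negbTE jp : j != p by rewrite neq_ltn prevC orbT.
move: (E j); rewrite !ffunE jp ltnNge (leq_trans kp (ltnW prevC)) /= => /eqP.
by rewrite eq_sym (negbTE Xj).
Qed.

Lemma card_diff_le X Y j p : j != p -> X j = Y j -> X p = Y p ->
  #|[set i | X i != Y i]| <= n - 2.
Proof.
move=> jp Xj Xp; have sub : [set i | X i != Y i] \subset ~: [set j; p].
  by apply/subsetP => i; rewrite !inE; apply: contra => /orP [] /eqP ->; rewrite ?Xj ?Xp.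
by have := subset_leq_card sub; have := cardsC [set j; p]; rewrite cards2 jp card_ord; lia.
Qed.

Fixpoint walk_along Y X (ms : seq 'I_n) : seq (word n) :=
  if ms is m :: ms' then
    if X m == Y m then walk_along Y X ms'
    else upd X m (Y m) :: walk_along Y (upd X m (Y m)) ms'
  else [::].

Definition walk X Y := walk_along Y X (enum 'I_n).

Lemma walk_path X Y : path (@differ1 n) X (walk X Y).
Proof.
rewrite /walk; elim: (enum _) X => [|m ms IH] X //=; case: ifP => XYm //=.
by rewrite IH differ1_upd ?XYm.
Qed.

Lemma walk_last X Y : last X (walk X Y) = Y.
Proof.
suff -> : forall ms X, last X (walk_along Y X ms) = [ffun i => if i \in ms then Y i else X i].
  by apply/ffunP => i; rewrite ffunE mem_enum.
elim=> [|m ms IH] {}X /=; first by apply/ffunP => i; rewrite ffunE.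
case: ifP => XYm /=; rewrite IH; apply/ffunP => i; rewrite !ffunE inE.
  by case: eqVneq => [->|] //=; rewrite (eqP XYm) if_same.
by case: eqVneq => [->|] //=; rewrite if_same.
Qed.

Lemma size_walk X Y : size (walk X Y) <= #|[set i | X i != Y i]|.
Proof.
have -> : #|[set i | X i != Y i]| = count (fun i => X i != Y i) (enum 'I_n).
  by rewrite cardE /enum_mem size_filter count_filter; apply: eq_count => i; rewrite !inE andbT.
rewrite /walk; elim: (enum _) X => [|m ms IH] X //=; case: ifP => XYm /=.
  by rewrite add0n IH.
rewrite add1n ltnS; apply: leq_trans (IH _) _; apply: sub_count => i /=.
by rewrite ffunE; case: (eqVneq i m) => [->|]; rewrite ?eqxx.
Qed.

Lemma size_walk_le X Y : size (walk X Y) <= n.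
Proof.
by apply: leq_trans (size_walk X Y) _; apply: leq_trans (max_card _) _; rewrite card_ord.
Qed.


Lemma mem_walk X Y W : W \in walk X Y -> exists k, W = splice X Y k.
Proof.
suff walk_alongE : forall ms X, W \in walk_along Y X ms ->
    exists k, W = [ffun i => if i \in take k ms then Y i else X i].
  move=> /walk_alongE [k ->]; exists k; apply/ffunP => i; rewrite !ffunE.
  by rewrite in_take ?mem_enum // index_enum_ord.
elim=> [|m ms IH] {}X //=; case: ifP => XYm.
  move=> /IH [k ->]; exists k.+1; apply/ffunP => i; rewrite !ffunE /= inE.
  by case: (eqVneq i m) => [->|] //=; rewrite (eqP XYm) if_same.
rewrite inE => /predU1P [->|/IH [k ->]].
  by exists 1; apply/ffunP => i; rewrite !ffunE /= inE take0 orbF; case: eqP => [->|].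
exists k.+1; apply/ffunP => i; rewrite !ffunE /= inE.
by case: (eqVneq i m) => [->|] //=; rewrite if_same.
Qed.

Definition tweak X j b := upd X j (other3 (X j) b).

Lemma differ1_tweak X j b : differ1 X (tweak X j b).
Proof. by apply: differ1_upd; rewrite eq_sym other3_neq. Qed.

Lemma tweak_neq X j b : tweak X j b != X.
Proof. by apply/eqP => /ffunP /(_ j); rewrite upd_eq; apply/eqP/other3_neq. Qed.

Lemma tweak_inj X j j' b b' : tweak X j b = tweak X j' b' -> j = j' /\ b = b'.
Proof.
move=> /ffunP /(_ j); rewrite upd_eq; case: (eqVneq j j') => [<-|jj'].
  by rewrite upd_eq => /other3_inj.
by rewrite upd_neq // => /eqP; rewrite (negbTE (other3_neq _ _)).
Qed.

Definition has_prev_diff X Y j := [exists k : 'I_n, (X k != Y k) && (k < j)].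

Definition prev_diff X Y j : 'I_n :=
  insubd j (\max_(k : 'I_n | (X k != Y k) && (k < j)) val k).

Lemma prev_diffP X Y j : has_prev_diff X Y j ->
  let p := prev_diff X Y j in
  [/\ X p != Y p, p < j & forall k : 'I_n, X k != Y k -> k < j -> k <= p].
Proof.
move=> /existsP [k0 k0P] p.
have [|m mP maxE] := @eq_bigmax_cond _ [pred k | (X k != Y k) && (k < j)] val.
  by apply/card_gt0P; exists k0.
have -> : p = m by apply: val_inj; rewrite /p /prev_diff val_insubd maxE ltn_ord.
case/andP: mP => -> ->; split=> // k Xk kj; rewrite -maxE.
by apply: (leq_bigmax_cond (F := val)); rewrite inE Xk.
Qed.

Lemma prev_diff_inj X Y j j' : X j != Y j -> X j' != Y j' ->
  has_prev_diff X Y j -> has_prev_diff X Y j' -> prev_diff X Y j = prev_diff X Y j' -> j = j'.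
Proof.
move=> Xj Xj' /prev_diffP [_ prevC maxj] /prev_diffP [_ pj' maxj'] E.
case: (ltngtP j j') => [jj' | j'j | /val_inj //].
  by have := maxj' j Xj jj'; rewrite -E leqNgt prevC.
by have := maxj j' Xj' j'j; rewrite E leqNgt pj'.
Qed.

Lemma first_diff_inj X Y j j' : X j != Y j -> X j' != Y j' ->
  ~~ has_prev_diff X Y j -> ~~ has_prev_diff X Y j' -> j = j'.
Proof.
move=> Xj Xj' /existsPn hj /existsPn hj'.
case: (ltngtP j j') => [jj' | j'j | /val_inj //].
  by move: (hj' j); rewrite Xj jj'.
by move: (hj j'); rewrite Xj' j'j.
Qed.
End Words.

Definition dC : 'I_3 := @Ordinal 3 0 isT.
Definition dB : 'I_3 := @Ordinal 3 1 isT.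
Definition dA : 'I_3 := @Ordinal 3 2 isT.

Section Graph.
Variables r s t : nat.
Implicit Types (a : word r) (b : word s) (c : word t) (x u v : vtx r s t).

Notation adj := (@e3c_adj r s t).

Lemma adj_dir a b c (d d' : 'I_3) : d != d' -> adj (a, b, c, d) (a, b, c, d').
Proof. by move=> dd'; rewrite /e3c_adj !eqxx dd'. Qed.

Lemma adj_C a b c c' : differ1 c c' -> adj (a, b, c, dC) (a, b, c', dC).
Proof. by move=> cc'; rewrite /e3c_adj !eqxx cc' orbT. Qed.

Lemma adj_B a b b' c : differ1 b b' -> adj (a, b, c, dB) (a, b', c, dB).
Proof. by move=> bb'; rewrite /e3c_adj !eqxx bb' !orbT. Qed.

Lemma adj_A a a' b c : differ1 a a' -> adj (a, b, c, dA) (a', b, c, dA).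
Proof. by move=> aa'; rewrite /e3c_adj !eqxx aa' !orbT. Qed.

Definition walkC a b c c' := [seq (a, b, W, dC) | W <- walk c c'].
Definition walkB a c b b' := [seq (a, W, c, dB) | W <- walk b b'].

Definition walkBC a b b' c c' := walkB a c b b' ++ (a, b', c, dC) :: walkC a b' c c'.
Definition walkCB a b b' c c' := walkC a b c c' ++ (a, b, c', dB) :: walkB a c' b b'.

Arguments walkBC : simpl never.
Arguments walkCB : simpl never.

Lemma path_walkC a b c c' : path adj (a, b, c, dC) (walkC a b c c').
Proof.
by rewrite path_map; apply: sub_path (walk_path c c') => W W'; exact: adj_C.
Qed.

Lemma path_walkB a c b b' : path adj (a, b, c, dB) (walkB a c b b').
Proof.
by rewrite path_map; apply: sub_path (walk_path b b') => W W'; exact: adj_B.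
Qed.

Lemma last_walkC a b c c' : last (a, b, c, dC) (walkC a b c c') = (a, b, c', dC).
Proof. by rewrite (last_map (fun W => (a, b, W, dC))) walk_last. Qed.

Lemma last_walkB a c b b' : last (a, b, c, dB) (walkB a c b b') = (a, b', c, dB).
Proof. by rewrite (last_map (fun W => (a, W, c, dB))) walk_last. Qed.

Lemma path_walkBC a b b' c c' : path adj (a, b, c, dB) (walkBC a b b' c c').
Proof.
rewrite cat_path path_walkB last_walkB; apply/and3P; split=> //.
  by apply: adj_dir.
exact: path_walkC.
Qed.

Lemma path_walkCB a b b' c c' : path adj (a, b, c, dC) (walkCB a b b' c c').
Proof.
rewrite cat_path path_walkC last_walkC; apply/and3P; split=> //.
  by apply: adj_dir.
exact: path_walkB.
Qed.

Lemma last_walkBC x a b b' c c' : last x (walkBC a b b' c c') = (a, b', c', dC).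
Proof. by rewrite last_cat last_cons last_walkC. Qed.

Lemma last_walkCB x a b b' c c' : last x (walkCB a b b' c c') = (a, b', c', dB).
Proof. by rewrite last_cat last_cons last_walkB. Qed.

Lemma path_walkBC_cat a b b' c c' l :
  path adj (a, b, c, dB) (walkBC a b b' c c' ++ l) = path adj (a, b', c', dC) l.
Proof. by rewrite cat_path path_walkBC last_walkBC. Qed.

Lemma path_walkCB_cat a b b' c c' l :
  path adj (a, b, c, dC) (walkCB a b b' c c' ++ l) = path adj (a, b', c', dB) l.
Proof. by rewrite cat_path path_walkCB last_walkCB. Qed.

Lemma size_walkBC a b b' c c' : size (walkBC a b b' c c') <= s + #|[set i | c i != c' i]| + 1.
Proof.
rewrite size_cat /= !size_map; move: (size_walk_le b b') (size_walk c c').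
by set m := #|_|; lia.
Qed.

Lemma size_walkBC_le a b b' c c' : size (walkBC a b b' c c') <= s + t + 1.
Proof.
apply: leq_trans (size_walkBC _ _ _ _ _) _; rewrite leq_add2r leq_add2l.
by apply: leq_trans (max_card _) _; rewrite card_ord.
Qed.

Lemma size_walkCB a b b' c c' : size (walkCB a b b' c c') <= s + t + 1.
Proof.
by rewrite size_cat /= !size_map; have := size_walk_le b b'; have := size_walk_le c c'; lia.
Qed.

Definition zoneBC a b' c c' x : Prop := let '(a0, b0, c0, d0) := x in
  a0 = a /\ (d0 = dB /\ c0 = c \/ d0 = dC /\ b0 = b' /\ exists k, c0 = splice c c' k).

Definition zoneCB a b c c' x : Prop := let '(a0, b0, c0, d0) := x in
  a0 = a /\ (d0 = dC /\ b0 = b /\ (exists k, c0 = splice c c' k) \/ d0 = dB /\ c0 = c').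

Lemma mem_walkBC a b b' c c' x : x \in walkBC a b b' c c' -> zoneBC a b' c c' x.
Proof.
rewrite mem_cat inE => /or3P [/mapP [W _ ->] | /eqP -> | /mapP [W /mem_walk kW ->]] /=.
- by split=> //; left.
- by split=> //; right; split=> //; split=> //; exists 0; rewrite splice0.
- by split=> //; right.
Qed.

Lemma mem_walkCB a b b' c c' x : x \in walkCB a b b' c c' -> zoneCB a b c c' x.
Proof.
rewrite mem_cat inE => /or3P [/mapP [W /mem_walk kW ->] | /eqP -> | /mapP [W _ ->]] /=.
- by split=> //; left.
- by split=> //; right.
- by split=> //; right.
Qed.

Lemma zoneBC_zoneCB_disjoint a b b' c c' x : b != b' -> c != c' ->
  zoneBC a b' c c' x -> zoneCB a b c c' x -> False.
Proof.
case: x => [[[a0 b0] c0] d0] /= bb' cc' [_ bcZ] [_ cbZ].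
case: bcZ cbZ => [[-> ->] | [-> [-> _]]] [[E [E' _]] | [E E']].
- by move/(congr1 val): E.
- by rewrite E' eqxx in cc'.
- by rewrite E' eqxx in bb'.
- by move/(congr1 val): E.
Qed.
End Graph.

Definition path_family r s t (I : eqType) (u v : vtx r s t) (n : nat)
    (P : I -> seq (vtx r s t)) : Prop :=
  (forall i, e3c_path u v (P i) /\ size (P i) <= n) /\
  (forall i j, i != j -> int_disjoint v (P i) (P j)).

Section Families.
Variables r s t : nat.
Implicit Types (u v x : vtx r s t).

Lemma path_family_zones (I : eqType) u v n (P : I -> seq (vtx r s t))
    (Z : I -> vtx r s t -> Prop) :
  (forall i, [/\ path (@e3c_adj r s t) u (P i), last u (P i) = v & size (P i) <= n]) ->
  (forall i x, x \in P i -> x != v -> Z i x) ->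
  (forall i j x, Z i x -> Z j x -> i = j) ->
  path_family u v n (fun i => shorten u (P i)).
Proof.
move=> walkP zoneP zone_inj.
have shorten_sub i : {subset shorten u (P i) <= P i}.
  by have [Pi _ _] := walkP i; case: (shortenP Pi).
split=> [i | i j ij].
  have [Pi <- sizePi] := walkP i; case: (shortenP Pi) => q qpath quniq qsub.
  rewrite /e3c_path qpath eqxx quniq; split=> //; apply: leq_trans sizePi.
  by apply: uniq_leq_size qsub; case/andP: quniq.
apply/hasP => -[x]; rewrite /interior !mem_filter => /andP [xv /shorten_sub xPi].
move=> /andP [_ /shorten_sub xPj]; move/eqP: ij; apply.
exact: zone_inj (zoneP _ _ xPi xv) (zoneP _ _ xPj xv).
Qed.

Lemma path_family_ord (K : finType) m u v n (P : K -> seq (vtx r s t)) : #|K| = m ->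
  path_family u v n P -> exists P' : 'I_m -> seq (vtx r s t), path_family u v n P'.
Proof.
move=> <- [pathP disjP]; exists (fun i => P (enum_val i)); split=> [i | i j ij].
  exact: pathP.
by apply: disjP; apply: contra ij => /eqP /enum_val_inj ->.
Qed.
End Families.

(* Exchanging the B and C blocks together with the directions 0 and 1 is an
   isomorphism E3C(r,s,t) -> E3C(r,t,s). *)
Definition swap_dir (d : 'I_3) : 'I_3 := if d == dC then dB else if d == dB then dC else d.

Definition swap_vtx r s t (x : vtx r s t) : vtx r t s :=
  let '(a, b, c, d) := x in (a, c, b, swap_dir d).

Lemma swap_dirK : involutive swap_dir.
Proof. by case=> [[|[|[|n]]] dn] //; apply: val_inj. Qed.

Lemma swap_vtxK r s t (x : vtx r s t) : swap_vtx (swap_vtx x) = x.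
Proof. by case: x => [[[a b] c] d] /=; rewrite swap_dirK. Qed.

Lemma swap_vtx_inj r s t : injective (@swap_vtx r s t).
Proof. by move=> x y E; rewrite -[x]swap_vtxK -[y]swap_vtxK E. Qed.

Lemma swap_adj r s t (x y : vtx r s t) : e3c_adj (swap_vtx x) (swap_vtx y) = e3c_adj x y.
Proof.
case: x => [[[a b] c] [[|[|[|n]]] dn]]; case: y => [[[a' b'] c'] [[|[|[|n']]] dn']] //.
all: rewrite /e3c_adj /=; by case: (a == a'); case: (b == b'); case: (c == c').
Qed.

Lemma path_family_swap r s t (I : eqType) (u v : vtx r s t) n (P : I -> seq (vtx r s t)) :
  path_family u v n P ->
  path_family (swap_vtx u) (swap_vtx v) n (fun i => map (@swap_vtx r s t) (P i)).
Proof.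
have swap_interior (q : seq (vtx r s t)) :
    interior (swap_vtx v) (map (@swap_vtx r s t) q) = map (@swap_vtx r s t) (interior v q).
  rewrite /interior filter_map; congr map; apply: eq_filter => x /=.
  by rewrite inj_eq //; apply: swap_vtx_inj.
move=> [pathP disjP]; split=> [i | i j ij].
- have [/and3P [Pi /eqP lastPi uniqPi] sizePi] := pathP i; split; last by rewrite size_map.
  apply/and3P; split.
  + by rewrite path_map; apply: sub_path Pi => x y /=; rewrite swap_adj.
  + by rewrite last_map lastPi.
  + by rewrite -map_cons map_inj_uniq //; apply: swap_vtx_inj.
- rewrite /int_disjoint !swap_interior has_map; apply: contra (disjP i j ij) => /hasP [x xi /=].
  by rewrite mem_map; [move=> xj; apply/hasP; exists x | apply: swap_vtx_inj].
Qed.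

Arguments e3c_adj : simpl never.

Section DirectionA.
Variables (r s t : nat) (A : word r) (B B' : word s) (C C' : word t).
Hypotheses (nB : B != B') (nC : C != C').

Definition routeA (k : 'I_r * bool + bool) : seq (vtx r s t) :=
  match k with
  | inl (j, e) => let a := tweak A j e in
      (a, B, C, dA) :: (a, B, C, dB) :: walkBC a B B' C C' ++ [:: (a, B', C', dA); (A, B', C', dA)]
  | inr true => (A, B, C, dB) :: walkBC A B B' C C' ++ [:: (A, B', C', dA)]
  | inr false => (A, B, C, dC) :: walkCB A B B' C C' ++ [:: (A, B', C', dA)]
  end.

Definition zoneA (k : 'I_r * bool + bool) (x : vtx r s t) : Prop :=
  match k with
  | inl (j, e) => x.1.1.1 = tweak A j e
  | inr true => zoneBC A B' C C' x
  | inr false => zoneCB A B C C' x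
  end.

Lemma routeA_walk k : [/\ path (@e3c_adj r s t) (A, B, C, dA) (routeA k),
  last (A, B, C, dA) (routeA k) = (A, B', C', dA) & size (routeA k) <= s + t + 5].
Proof.
case: k => [[j e] | [] /=]; split => /=.
all: rewrite ?path_walkBC_cat ?path_walkCB_cat ?last_cat ?last_walkBC ?last_walkCB //=.
all: try by rewrite !adj_dir // ?adj_A // ?differ1_tweak // differ1C differ1_tweak.
all: rewrite size_cat /=.
- by move: (size_walkBC_le (tweak A j e) B B' C C'); set n := size _; lia.
- by move: (size_walkBC_le A B B' C C'); set n := size _; lia.
- by move: (size_walkCB A B B' C C'); set n := size _; lia.
Qed.

Lemma mem_routeA k x : x \in routeA k -> x != (A, B', C', dA) -> zoneA k x.
Proof.
case: k => [[j e] | [] /=]; rewrite !in_cons mem_cat !in_cons in_nil orbF.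
- case/orP => [/eqP -> | /orP [/eqP -> | /orP [/mem_walkBC | /orP [/eqP -> | /eqP -> /eqP //]]]] //.
  by case: x => [[[? ?] ?] ?] [].
- by case/or3P => [/eqP -> _ | /mem_walkBC Z _ // | /eqP -> /eqP //]; split=> //; left.
- case/or3P => [/eqP -> _ | /mem_walkCB Z _ // | /eqP -> /eqP //].
  by split=> //; left; split=> //; split=> //; exists 0; rewrite splice0.
Qed.

Lemma zoneA_inj k k' x : zoneA k x -> zoneA k' x -> k = k'.
Proof.
case: x => [[[a b] c] d].
case: k k' => [[j e] | []] [[j' e'] | []] //=.
- by move=> -> /tweak_inj [-> ->].
- by move=> -> [E _]; have := tweak_neq A j e; rewrite E eqxx.
- by move=> -> [E _]; have := tweak_neq A j e; rewrite E eqxx.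
- by move=> [E _] E'; have := tweak_neq A j' e'; rewrite -E' E eqxx.
- by move=> Z Z'; case: (zoneBC_zoneCB_disjoint (x := (a, b, c, d)) nB nC Z Z').
- by move=> [E _] E'; have := tweak_neq A j' e'; rewrite -E' E eqxx.
- by move=> Z Z'; case: (zoneBC_zoneCB_disjoint (x := (a, b, c, d)) nB nC Z' Z).
Qed.

Lemma e3c_family_dirA :
  path_family (A, B, C, dA) (A, B', C', dA) (s + t + 5) (fun k => shorten (A, B, C, dA) (routeA k)).
Proof.
apply: path_family_zones zoneA_inj; [exact: routeA_walk | exact: mem_routeA].
Qed.
End DirectionA.

Section DirectionC.
Variables (r s t : nat) (A : word r.+1) (B B' : word s) (C C' : word t).
Hypotheses (r_lt_t : r < t) (nB : B != B') (nC : C != C').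

Definition cpos (j : 'I_r.+1) : 'I_t := widen_ord r_lt_t j.

Lemma cpos_inj : injective cpos.
Proof. by move=> j j' /(congr1 val) E; apply: val_inj. Qed.

Definition detourA := tweak A ord0 true.
Definition fixA j := tweak A j false.
Definition prevC j := prev_diff C C' (cpos j).
Definition fixC j := upd C (cpos j) (C' (cpos j)).
Definition unfixC j := upd C' (prevC j) (C (prevC j)).

Lemma prevC_lt j : has_prev_diff C C' (cpos j) -> prevC j < cpos j /\ C (prevC j) != C' (prevC j).
Proof. by case/prev_diffP. Qed.

Inductive kindC := ViaB | ViaC | ViaA | ViaFresh of 'I_r.+1 & 'I_3 | ViaFix of 'I_r.+1.

Definition valid_kind k : Prop :=
  match k with
  | ViaFresh j cc => cc != C (cpos j) /\ cc != C' (cpos j)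
  | ViaFix j => C (cpos j) != C' (cpos j) /\ has_prev_diff C C' (cpos j)
  | _ => True
  end.

Local Notation v := (A, B', C', dC).

Definition routeC k : seq (vtx r.+1 s t) :=
  match k with
  | ViaB => (A, B, C, dB) :: walkBC A B B' C C'
  | ViaC => walkCB A B B' C C' ++ [:: v]
  | ViaA => (A, B, C, dA) :: (detourA, B, C, dA) :: (detourA, B, C, dB) ::
      walkBC detourA B B' C C' ++ [:: (detourA, B', C', dA); (A, B', C', dA); v]
  | ViaFresh j cc => let c := upd C (cpos j) cc in
      (A, B, c, dC) :: (A, B, c, dB) :: walkBC A B B' c (upd C' (cpos j) cc) ++ [:: v]
  | ViaFix j => let a := fixA j in
      (A, B, fixC j, dC) :: (A, B, fixC j, dA) :: (a, B, fixC j, dA) :: (a, B, fixC j, dB) ::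
      walkBC a B B' (fixC j) (unfixC j) ++
      [:: (a, B', unfixC j, dA); (A, B', unfixC j, dA); (A, B', unfixC j, dC); v]
  end.

Lemma routeC_walk k : valid_kind k -> [/\ path (@e3c_adj r.+1 s t) (A, B, C, dC) (routeC k),
  last (A, B, C, dC) (routeC k) = v & size (routeC k) <= s + t + 7].
Proof.
case: k => [||| j cc | j] /= vk; split; rewrite /=.
all: rewrite ?path_walkBC ?path_walkBC_cat ?path_walkCB_cat ?last_walkBC ?last_walkCB ?last_cat //=.
all: try by rewrite !adj_dir // ?adj_A ?differ1_tweak // differ1C differ1_tweak.
- by move: (size_walkBC_le A B B' C C'); set m := size _; lia.
- by rewrite size_cat /=; move: (size_walkCB A B B' C C'); set m := size _; lia.
- by rewrite size_cat /=; move: (size_walkBC_le detourA B B' C C'); set m := size _; lia.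
- case: vk => cC cC'.
  rewrite adj_C ?differ1_upd 1?eq_sym // adj_dir // adj_C //.
  by rewrite differ1C differ1_upd // eq_sym.
- rewrite size_cat /=.
  by move: (size_walkBC_le A B B' (upd C (cpos j) cc) (upd C' (cpos j) cc)); set m := size _; lia.
- case: vk => C_new /prevC_lt [_ Cprev].
  rewrite adj_C ?differ1_upd // !adj_dir // adj_A ?differ1_tweak // adj_A; last first.
    by rewrite differ1C differ1_tweak.
  by rewrite adj_C // differ1C differ1_upd // eq_sym.
- case: vk => _ /prevC_lt [prev_lt _].
  have jp : cpos j != prevC j by rewrite neq_ltn prev_lt orbT.
  have e1 : fixC j (cpos j) = unfixC j (cpos j) by rewrite /fixC /unfixC upd_eq upd_neq.
  have e2 : fixC j (prevC j) = unfixC j (prevC j) by rewrite /fixC /unfixC upd_eq upd_neq // eq_sym.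
  move: (card_diff_le jp e1 e2); rewrite size_cat /=.
  move: (size_walkBC (fixA j) B B' (fixC j) (unfixC j)) (ltn_ord (cpos j)) prev_lt.
  by set m := size _; set m' := #|_|; lia.
Qed.

Definition detour_zone (x : vtx r.+1 s t) : Prop := let '(a, b, c, d) := x in
  a = detourA \/ a = A /\ d = dA /\ exists m, c = splice C C' m.

Definition fresh_zone j cc (x : vtx r.+1 s t) : Prop := let '(a, b, c, d) := x in
  a = A /\ exists2 M, mixed C C' M & c = upd M (cpos j) cc.

Definition fix_zone j (x : vtx r.+1 s t) : Prop := let '(a, b, c, d) := x in
  a = fixA j \/ a = A /\ (b = B /\ c = fixC j \/ b = B' /\ c = unfixC j).

Definition zoneC k : vtx r.+1 s t -> Prop :=
  match k with
  | ViaB => zoneBC A B' C C'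
  | ViaC => zoneCB A B C C'
  | ViaA => detour_zone
  | ViaFresh j cc => fresh_zone j cc
  | ViaFix j => fix_zone j
  end.

Lemma mem_routeC k x : x \in routeC k -> x != v -> zoneC k x.
Proof.
case: k => [||| j cc | j] /=.
- rewrite in_cons; by case/orP => [/eqP -> _ | /mem_walkBC //]; split=> //; left.
- rewrite mem_cat mem_seq1; by case/orP => [/mem_walkCB // | /eqP -> /eqP].
- rewrite !in_cons mem_cat !in_cons in_nil orbF.
  case/orP => [/eqP -> _ | /orP [/eqP -> _ | /orP [/eqP -> _ | /orP [/mem_walkBC | /orP
    [/eqP -> _ | /orP [/eqP -> _ | /eqP -> /eqP //]]]]]].
  + by right; split=> //; split=> //; exists 0; rewrite splice0.
  + by left.
  + by left.
  + by case: x => [[[a b] c] d] [-> _]; left.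
  + by left.
  + by right; split=> //; split=> //; exists t; rewrite splice_all.
- have mixedC : mixed C C' C by move=> i; left.
  rewrite !in_cons mem_cat !in_cons in_nil orbF.
  case/orP => [/eqP -> _ | /orP [/eqP -> _ | /orP [/mem_walkBC | /eqP -> /eqP //]]].
  + by split=> //; exists C.
  + by split=> //; exists C.
  + case: x => [[[a b] c] d] [-> [[_ ->] | [_ [_ [m ->]]]]] _; split=> //; first by exists C.
    by exists (splice C C' m); [apply: splice_mixed | rewrite splice_upd].
- rewrite !in_cons mem_cat !in_cons in_nil orbF.
  case/orP => [/eqP -> _ | /orP [/eqP -> _ | /orP [/eqP -> _ | /orP [/eqP -> _ | /orP
    [/mem_walkBC | /orP [/eqP -> _ | /orP [/eqP -> _ | /orP [/eqP -> _ | /eqP -> /eqP //]]]]]]]].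
  1,2: by right; split=> //; left.
  5,6: by right; split=> //; right.
  1,2,4: by left.
  by case: x => [[[a b] c] d] [-> _]; left.
Qed.

Lemma fixA_neq_A j : fixA j != A.
Proof. exact: tweak_neq. Qed.

Lemma detourA_neq_A : detourA != A.
Proof. exact: tweak_neq. Qed.

Lemma detourA_neq_fixA j : detourA != fixA j.
Proof. by apply/eqP => /tweak_inj []. Qed.

Lemma viaB_zone_splice a b c d : zoneC ViaB (a, b, c, d) -> a = A /\ exists m, c = splice C C' m.
Proof. by case=> -> [[_ ->] | [_ [_ cm]]]; split=> //; exists 0; rewrite splice0. Qed.

Lemma viaC_zone_splice a b c d : zoneC ViaC (a, b, c, d) -> a = A /\ exists m, c = splice C C' m.
Proof. by case=> -> [[_ [_ cm]] | [_ ->]]; split=> //; exists t; rewrite splice_all. Qed.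

Lemma fresh_zone_not_mixed j cc a b c d : valid_kind (ViaFresh j cc) ->
  zoneC (ViaFresh j cc) (a, b, c, d) -> a = A /\ ~ mixed C C' c.
Proof. by move=> [cC cC'] [-> [M _ ->]]; split=> //; apply: upd_not_mixed. Qed.

Lemma fresh_zone_splice j cc a b d m : valid_kind (ViaFresh j cc) ->
  ~ zoneC (ViaFresh j cc) (a, b, splice C C' m, d).
Proof. by move=> vk /(fresh_zone_not_mixed vk) [_]; apply; apply: splice_mixed. Qed.

Lemma fix_zone_A j a b c d : valid_kind (ViaFix j) -> zoneC (ViaFix j) (a, b, c, d) ->
  a = fixA j \/ [/\ a = A, mixed C C' c & forall m, c != splice C C' m].
Proof.
move=> [C_new /prevC_lt [pj Cp]] [-> | [-> [[_ ->] | [_ ->]]]]; [by left | right..].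
  split=> // [|m]; last exact: upd_neq_splice pj Cp C_new.
  by apply: mixed_upd; [move=> i; left | right].
split=> // [|m]; last exact: updr_neq_splice pj Cp C_new.
by apply: mixed_upd; [move=> i; right | left].
Qed.

Lemma fix_zone_splice j b d m : valid_kind (ViaFix j) ->
  ~ zoneC (ViaFix j) (A, b, splice C C' m, d).
Proof.
move=> vk /(fix_zone_A vk) [E | [_ _ /(_ m)]]; last by rewrite eqxx.
by move: (fixA_neq_A j); rewrite E eqxx.
Qed.

Lemma fix_zone_inj j j' a b c d : valid_kind (ViaFix j) -> valid_kind (ViaFix j') ->
  zoneC (ViaFix j) (a, b, c, d) -> zoneC (ViaFix j') (a, b, c, d) -> j = j'.
Proof.
move=> [C_new hj] [C'_new hj'].
case=> [-> | [-> [[-> ->] | [-> ->]]]] [E | [E [[E' E''] | [E' E'']]]].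
all: try by [ move: (fixA_neq_A j); rewrite E eqxx
            | move: (fixA_neq_A j'); rewrite -E eqxx
            | move: nB; rewrite E' eqxx ].
- by case/tweak_inj: E.
- by apply: cpos_inj; apply: upd_inj E''; rewrite eq_sym.
- apply: cpos_inj; apply: (prev_diff_inj C_new C'_new hj hj').
  by apply: upd_inj E''; case/prevC_lt: hj.
Qed.

Definition kind_rank k :=
  match k with ViaB => 0 | ViaC => 1 | ViaA => 2 | ViaFresh _ _ => 3 | ViaFix _ => 4 end.

Lemma zoneC_inj k k' x : valid_kind k -> valid_kind k' -> zoneC k x -> zoneC k' x -> k = k'.
Proof.
wlog le_kk' : k k' / kind_rank k <= kind_rank k'.
  move=> wlog_le vk vk' Z Z'; case: (leqP (kind_rank k) (kind_rank k')) => [le | /ltnW le].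
    exact: wlog_le.
  by symmetry; apply: wlog_le.
case: x => [[[a b] c] d].
case: k k' le_kk' => [||| j cc | j] [||| j' cc' | j'] // _ vk vk'.
- by move=> Z Z'; case: (zoneBC_zoneCB_disjoint (x := (a, b, c, d)) nB nC Z Z').
- case=> -> [[-> _] | [-> _]] [E | [_ [E _]]]; try by move/eqP: E.
  all: by move: detourA_neq_A; rewrite E eqxx.
- by move=> /viaB_zone_splice [_ [m ->]] /(fresh_zone_splice vk').
- by move=> /viaB_zone_splice [-> [m ->]] /(fix_zone_splice vk').
- case=> -> [[-> _] | [-> _]] [E | [_ [E _]]]; try by move/eqP: E.
  all: by move: detourA_neq_A; rewrite E eqxx.
- by move=> /viaC_zone_splice [_ [m ->]] /(fresh_zone_splice vk').
- by move=> /viaC_zone_splice [-> [m ->]] /(fix_zone_splice vk').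
- case=> [-> /(fresh_zone_not_mixed vk') [E _] | [_ [_ [m ->]]] /(fresh_zone_splice vk') //].
  by move: detourA_neq_A; rewrite E eqxx.
- case=> [-> /(fix_zone_A vk') [E | [E _ _]] | [-> [_ [m ->]]] /(fix_zone_splice vk') //].
  + by move: (detourA_neq_fixA j'); rewrite E eqxx.
  + by move: detourA_neq_A; rewrite E eqxx.
- case: vk => cC cC' [_ [M _ ->]] [_ [M' mM' E]].
  by case: (upd_mixed_inj mM' cC cC' E) => /cpos_inj -> ->.
- move=> /(fresh_zone_not_mixed vk) [-> not_mixed] /(fix_zone_A vk') [E | [_ mc _] //].
  by move: (fixA_neq_A j'); rewrite E eqxx.
- by move=> Z Z'; rewrite (fix_zone_inj vk vk' Z Z').
Qed.

Definition kind_of (k : 'I_r.+1 * bool + bool) : kindC :=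
  match k with
  | inl (j, e) => let cc := other3 (C (cpos j)) e in
      if cc != C' (cpos j) then ViaFresh j cc
      else if has_prev_diff C C' (cpos j) then ViaFix j else ViaC
  | inr true => ViaB
  | inr false => ViaA
  end.

Lemma kind_of_valid k : valid_kind (kind_of k).
Proof.
case: k => [[j e] | []] //=; case: ifP => [cC' | /negbFE /eqP cC'].
  by split=> //; apply: other3_neq.
by case: ifP => //= ->; rewrite -cC' eq_sym other3_neq.
Qed.

Lemma kind_of_inj : injective kind_of.
Proof.
have C_new j e : other3 (C (cpos j)) e = C' (cpos j) -> C (cpos j) != C' (cpos j).
  by move=> <-; rewrite eq_sym other3_neq.
case=> [[j e] | []] [[j' e'] | []] //=.
all: repeat case: ifP => //.
- by move=> _ _ [<- /other3_inj <-].
- move=> _ /negbFE /eqP cC _ /negbFE /eqP cC' [jj']; subst j'.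
  by rewrite -cC' in cC; move/other3_inj: cC => ->.
- move=> /negbT hj /negbFE /eqP cC /negbT hj' /negbFE /eqP cC' _.
  have jj' := cpos_inj (first_diff_inj (C_new _ _ cC) (C_new _ _ cC') hj hj'); subst j'.
  by rewrite -cC' in cC; move/other3_inj: cC => ->.
Qed.

Lemma e3c_family_dirC :
  path_family (A, B, C, dC) v (s + t + 7) (fun k => shorten (A, B, C, dC) (routeC (kind_of k))).
Proof.
apply: (path_family_zones (Z := fun k => zoneC (kind_of k))).
- by move=> k; apply: routeC_walk; apply: kind_of_valid.
- by move=> k x; apply: mem_routeC.
- by move=> k k' x Z Z'; apply: kind_of_inj; apply: zoneC_inj Z Z'; apply: kind_of_valid.
Qed.
End DirectionC.

Theorem lemma9 (r s t : nat) (A : word r) (B B' : word s) (C C' : word t)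
  (d : 'I_3) :
  1 <= r -> r <= s -> s <= t -> B != B' -> C != C' ->
  exists P : 'I_(2 * r + 2) -> seq (vtx r s t),
    (forall i, e3c_path (A, B, C, d) (A, B', C', d) (P i) /\
       size (P i) <= (if val d == 2 then s + t + 5 else s + t + 7)) /\
    (forall i j, i != j -> int_disjoint (A, B', C', d) (P i) (P j)).
Proof.
case: r A => [|r] A // _ rs st nB nC.
have card_idx : #|{: 'I_r.+1 * bool + bool}| = 2 * r.+1 + 2.
  by rewrite card_sum card_prod card_ord card_bool mulnC.
case: d => [[|[|[|n]]] dn] //; apply: path_family_ord card_idx _.
- have -> : Ordinal dn = dC by apply: val_inj.
  exact: (e3c_family_dirC A (leq_trans rs st) nB nC).
- have -> : Ordinal dn = dB by apply: val_inj.
  by have := path_family_swap (e3c_family_dirC A rs nC nB); rewrite [t + s]addnC; apply.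
- have -> : Ordinal dn = dA by apply: val_inj.
  exact: e3c_family_dirA.
Qed.
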